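(* Let $G$ be a finitely generated group such that $F'$ consists of weak* identities in $G$ modulo $F''$. Then for every $n\ge1$, $F'$ consists of weak* identities in $G$ modulo $F^{(n)}$, the $n$-th term of the derived series of $F$.
   Context: Let $F$ be the free group on countably many generators $g_1,g_2,\dots$; its derived series is $F^{(1)}=F'=[F,F]$, $F^{(k+1)}=[F^{(k)},F^{(k)}]$, and $F''=F^{(2)}$. For $N\ge 1$, $F^{\times N}$ is the direct product of $N$ copies of $F$, $i_k:F\to F^{\times N}$ the $k$-th inclusion. A subset $S\subset F$ is a set of weak identities in a group $G$ if there exists $N\ge1$ such that for any $s_1,\dots,s_N\in S$ and any homomorphism $\rho:F^{\times N}\to G$ some $k$ has $\rho(i_k(s_k))=1$. A $T$-subgroup of $F$ is a subgroup preserved by all endomorphisms of $F$. For a $T$-subgroup $\mathcal{H}$, $\mathcal{H}(G)=\{\pi(h):h\in\mathcal{H},\ \pi:F\to G\text{ a homomorphism}\}$. $S$ consists of weak identities modulo $\mathcal{H}$ in $G$ if $S$ is a set of weak identities in $G/\mathcal{H}(G)$. A $T$-subgroup $\mathcal{S}$ consists of weak* identities in $G$ modulo a $T$-subgroup $\mathcal{H}$ if there exist $m\ge0$ and $T$-subgroups $\mathcal{S}_0=\mathcal{S},\dots,\mathcal{S}_m=\mathcal{H}$ such that $\mathcal{S}_{j-1}$ consists of weak identities modulo $\mathcal{S}_j$ in $G$ for all $j=1,\dots,m$. *)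

From Stdlib Require Import Relations.
From mathcomp Require Import all_boot.
Set Implicit Arguments. Unset Strict Implicit. Unset Printing Implicit Defensive.

Record group := Group {
  gcar :> Type;
  gmul : gcar -> gcar -> gcar;
  ginv : gcar -> gcar;
  gone : gcar;
  gmulA : forall x y z, gmul x (gmul y z) = gmul (gmul x y) z;
  gmul1g : forall x, gmul gone x = x;
  gmulVg : forall x, gmul (ginv x) x = gone
}.

Definition gcomm (G : group) (x y : G) : G :=
  gmul (ginv x) (gmul (ginv y) (gmul x y)).

(** * The free group F on generators g_0, g_1, ... as words modulo free reduction *)
(* letter (i, false) = g_i, letter (i, true) = g_i^-1 *)
Definition letter := (nat * bool)%type.
Definition word := seq letter.

Definition linv (l : letter) : letter := (l.1, ~~ l.2).
Definition winv (w : word) : word := rev (map linv w).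
Definition wcomm (a b : word) : word := winv a ++ winv b ++ a ++ b.

(* one-step free reduction and its equivalence closure: equality in F *)
Definition fred (u v : word) : Prop :=
  exists (x y : word) (l : letter), u = x ++ [:: l; linv l] ++ y /\ v = x ++ y.
Definition freeq : word -> word -> Prop := clos_refl_sym_trans word fred.

(* endomorphisms of F: substitutions of generators by words *)
Definition wsubst (s : nat -> word) (w : word) : word :=
  flatten (map (fun l : letter => if l.2 then winv (s l.1) else s l.1) w).

(* homomorphisms F -> G: determined by the images a : nat -> G of generators *)
Definition weval (G : group) (a : nat -> G) (w : word) : G :=
  foldr (fun (l : letter) acc =>
           gmul (if l.2 then ginv (a l.1) else a l.1) acc) (gone G) w.

(** Subsets of F are predicates on words; a subgroup must respect freeq. *)
Definition is_subgroupF (H : word -> Prop) : Prop :=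
  [/\ forall u v, freeq u v -> H u -> H v,
      H [::],
      forall u v, H u -> H v -> H (u ++ v)
    & forall u, H u -> H (winv u)].

Definition is_Tsubgroup (H : word -> Prop) : Prop :=
  is_subgroupF H /\ forall s w, H w -> H (wsubst s w).

Inductive comm_sub (P : word -> Prop) : word -> Prop :=
| cs_comm a b : P a -> P b -> comm_sub P (wcomm a b)
| cs_nil : comm_sub P [::]
| cs_cat u v : comm_sub P u -> comm_sub P v -> comm_sub P (u ++ v)
| cs_inv u : comm_sub P u -> comm_sub P (winv u)
| cs_eq u v : freeq u v -> comm_sub P u -> comm_sub P v.

Fixpoint derived (k : nat) : word -> Prop :=
  match k with
  | 0 => fun _ => True
  | k'.+1 => comm_sub (derived k')
  end.

(* H(G) = { pi(h) : h in H, pi : F -> G homomorphism } *)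
Definition values (H : word -> Prop) (G : group) : G -> Prop :=
  fun x => exists (h : word) (a : nat -> G), H h /\ x = weval a h.

(** S is a set of weak identities in G / K (K a normal subgroup of G, here
    always K = H(G)).  A homomorphism rho : F^{xN} -> G/K is given by the
    images (lifted to G) a k i of the generators i_k(g_i), subject to the
    requirement that images coming from different factors commute in G/K,
    i.e. their commutators lie in K; rho(i_k(s)) = 1 in G/K iff
    weval (a k) s lies in K. *)
Definition weak_ids_mod (G : group) (K : G -> Prop) (S : word -> Prop) : Prop :=
  exists N : nat, 0 < N /\
    forall s : 'I_N -> word, (forall k, S (s k)) ->
    forall a : 'I_N -> nat -> G,
      (forall k l : 'I_N, k != l -> forall i j, K (gcomm (a k i) (a l j))) ->
      exists k : 'I_N, K (weval (a k) (s k)).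

Definition weak_ids_modT (G : group) (H S : word -> Prop) : Prop :=
  @weak_ids_mod G (@values H G) S.

Definition weakstar_ids_mod (G : group) (S H : word -> Prop) : Prop :=
  exists (m : nat) (Ss : nat -> word -> Prop),
    [/\ Ss 0 = S, Ss m = H,
        forall j, j <= m -> is_Tsubgroup (Ss j)
      & forall j, 0 < j <= m -> weak_ids_modT G (Ss j) (Ss j.-1)].

Definition fin_gen (G : group) : Prop :=
  exists gens : seq G, forall x : G,
    exists w : word, x = weval (fun i => nth (gone G) gens i) w.

From mathcomp Require Import all_boot zify.
From Stdlib Require Import Relations Classical ClassicalEpsilon.
Set Implicit Arguments. Unset Strict Implicit. Unset Printing Implicit Defensive.

(* If the words of S are weak identities modulo H, then the commutators
   [S, S] are weak identities modulo [H, H].  Fix a homomorphism rho of F^N;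
   choosing for every factor k a word of S whose image under rho o i_k escapes
   H(G), if there is one, the weak identity property yields a factor k on
   which ALL of S lands in H(G).  Then rho o i_k maps [S, S] into the subgroup
   generated by [H(G), H(G)], which lies in [H, H](G).  Applied to each link
   of a weak* chain from F' to F'', and iterated, this gives weak* chains from
   F^(n) to F^(n+1), which concatenate. *)

Section GroupFacts.
Variable G : group.
Implicit Types x y : G.

Lemma gmulgV x : gmul x (ginv x) = gone G.
Proof.
rewrite -[gmul x (ginv x)]gmul1g -[in gmul (gone G) _](gmulVg (ginv x)).
by rewrite -gmulA [gmul (ginv x) (gmul x _)]gmulA gmulVg gmul1g gmulVg.
Qed.

Lemma gmulg1 x : gmul x (gone G) = x.
Proof. by rewrite -(gmulVg x) gmulA gmulgV gmul1g. Qed.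

Lemma ginv_unique x y : gmul x y = gone G -> y = ginv x.
Proof. by move=> xy1; rewrite -[y]gmul1g -(gmulVg x) -gmulA xy1 gmulg1. Qed.

Lemma ginvM x y : ginv (gmul x y) = gmul (ginv y) (ginv x).
Proof.
symmetry; apply: ginv_unique.
by rewrite -gmulA [gmul y (gmul _ _)]gmulA gmulgV gmul1g gmulgV.
Qed.

Lemma ginvK x : ginv (ginv x) = x.
Proof. by symmetry; apply: ginv_unique; apply: gmulVg. Qed.

Lemma ginv1 : ginv (gone G) = gone G.
Proof. by symmetry; apply: ginv_unique; apply: gmul1g. Qed.

End GroupFacts.

Lemma linvK l : linv (linv l) = l.
Proof. by case: l => i b; rewrite /linv /= negbK. Qed.

Lemma winvK w : winv (winv w) = w.
Proof.
rewrite /winv map_rev revK -map_comp.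
by elim: w => [|l w IHw] //=; rewrite IHw linvK.
Qed.

Lemma winv_cat u v : winv (u ++ v) = winv v ++ winv u.
Proof. by rewrite /winv map_cat rev_cat. Qed.

Lemma winv_cons l w : winv (l :: w) = winv w ++ [:: linv l].
Proof. by rewrite /winv /= rev_cons cats1. Qed.

Lemma freeq_cancel p x y : freeq (x ++ p ++ winv p ++ y) (x ++ y).
Proof.
elim: p x y => [|l p IHp] x y; first exact: rst_refl.
rewrite winv_cons.
apply: rst_trans (_ : freeq ((x ++ [:: l]) ++ [:: linv l] ++ y) _).
  by have := IHp (x ++ [:: l]) (linv l :: y); rewrite -!catA.
by apply: rst_step; exists x, y, l; rewrite -catA.
Qed.

Definition subst_letter (s : nat -> word) (l : letter) : word :=
  if l.2 then winv (s l.1) else s l.1.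

Section Substitution.
Variable s : nat -> word.

Lemma wsubst_cons l w : wsubst s (l :: w) = subst_letter s l ++ wsubst s w.
Proof. by []. Qed.

Lemma wsubst_cat u v : wsubst s (u ++ v) = wsubst s u ++ wsubst s v.
Proof. by rewrite /wsubst map_cat flatten_cat. Qed.

Lemma subst_letter_linv l : subst_letter s (linv l) = winv (subst_letter s l).
Proof. by case: l => i [] //; rewrite /subst_letter /= winvK. Qed.

Lemma wsubst_winv w : wsubst s (winv w) = winv (wsubst s w).
Proof.
elim: w => [|l w IHw] //.
rewrite winv_cons wsubst_cat IHw wsubst_cons winv_cat.
by rewrite /wsubst /= cats0 -subst_letter_linv.
Qed.

Lemma wsubst_comm u v : wsubst s (wcomm u v) = wcomm (wsubst s u) (wsubst s v).
Proof. by rewrite /wcomm !wsubst_cat !wsubst_winv. Qed.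

Lemma freeq_wsubst u v : freeq u v -> freeq (wsubst s u) (wsubst s v).
Proof.
elim=> {u v} [u v [x [y [l [-> ->]]]]| u | u v _ | u v w _ uv _ vw].
- rewrite !wsubst_cat !wsubst_cons subst_letter_linv [wsubst s [::]]/= cats0 -catA.
  exact: freeq_cancel.
- exact: rst_refl.
- exact: rst_sym.
- exact: rst_trans vw.
Qed.

End Substitution.

Section Evaluation.
Variables (G : group) (a : nat -> G).

Lemma weval_cat u v : weval a (u ++ v) = gmul (weval a u) (weval a v).
Proof. by elim: u => [|l u IHu] /=; rewrite ?gmul1g // IHu gmulA. Qed.

Lemma weval_winv w : weval a (winv w) = ginv (weval a w).
Proof.
elim: w => [|l w IHw]; first by rewrite /= ginv1.
rewrite winv_cons weval_cat IHw /= gmulg1 ginvM.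
by case: l.2; rewrite ?ginvK.
Qed.

Lemma weval_comm u v : weval a (wcomm u v) = gcomm (weval a u) (weval a v).
Proof. by rewrite /wcomm !weval_cat !weval_winv. Qed.

Lemma weval_freeq u v : freeq u v -> weval a u = weval a v.
Proof.
elim=> {u v} [u v [x [y [l [-> ->]]]]| | u v _ -> | u v w _ -> _ ->] //.
rewrite !weval_cat /=; congr (gmul _ _).
by case: l.2; rewrite /= gmulg1 ?gmulVg ?gmulgV gmul1g.
Qed.

End Evaluation.

Lemma weval_wsubst (G : group) (c : nat -> G) s w :
  weval c (wsubst s w) = weval (fun i => weval c (s i)) w.
Proof.
elim: w => [|l w IHw] //=.
by rewrite weval_cat IHw /subst_letter; case: l.2; rewrite ?weval_winv.
Qed.

Lemma eq_weval (G : group) (a b : nat -> G) w : a =1 b -> weval a w = weval b w.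
Proof. by move=> ab; elim: w => [|l w IHw] //=; rewrite IHw ab. Qed.

Lemma Tsubgroup_nil H : is_Tsubgroup H -> H [::].
Proof. by case=> [[]]. Qed.

Lemma comm_sub_Tsubgroup H : is_Tsubgroup H -> is_Tsubgroup (comm_sub H).
Proof.
case=> _ substH; split.
  by split; [exact: cs_eq | exact: cs_nil | exact: cs_cat | exact: cs_inv].
move=> s w; elim=> {w} [u v Hu Hv| | u v _ IHu _ IHv | u _ IHu | u v uv _ IHu].
- by rewrite wsubst_comm; apply: cs_comm; apply: substH.
- exact: cs_nil.
- by rewrite wsubst_cat; apply: cs_cat.
- by rewrite wsubst_winv; apply: cs_inv.
- by apply: cs_eq IHu; apply: freeq_wsubst.
Qed.

Lemma comm_sub_sub H : is_Tsubgroup H -> forall w, comm_sub H w -> H w.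
Proof.
case=> -[eqH nilH catH invH] _ w.
elim=> [u v Hu Hv | | u v _ Hu _ Hv | u _ Hu | u v uv _ Hu].
- exact: catH (invH _ Hu) (catH _ _ (invH _ Hv) (catH _ _ Hu Hv)).
- exact: nilH.
- exact: catH.
- exact: invH.
- exact: eqH Hu.
Qed.

Lemma derived_Tsubgroup n : is_Tsubgroup (derived n).
Proof.
elim: n => [|n IHn]; last exact: comm_sub_Tsubgroup.
by do !split.
Qed.

(* Two homomorphisms F -> G are merged into one by sending g_(2i) where the
   first sends g_i and g_(2i+1) where the second does; T-stability of H lets
   the words be renamed apart accordingly. *)
Definition shift_gens (k : nat) : nat -> word := fun i => [:: (i.*2 + k, false)].

Definition merge_gens (G : group) (a b : nat -> G) : nat -> G :=
  fun i => if odd i then b i./2 else a i./2.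

Section Values.
Variables (G : group) (H : word -> Prop).
Hypothesis HT : is_Tsubgroup H.
Implicit Types x y : G.

Lemma weval_shift_gens0 (a b : nat -> G) w :
  weval (merge_gens a b) (wsubst (shift_gens 0) w) = weval a w.
Proof.
rewrite weval_wsubst; apply: eq_weval => i /=.
by rewrite gmulg1 /merge_gens addn0 odd_double doubleK.
Qed.

Lemma weval_shift_gens1 (a b : nat -> G) w :
  weval (merge_gens a b) (wsubst (shift_gens 1) w) = weval b w.
Proof.
rewrite weval_wsubst; apply: eq_weval => i /=.
by rewrite gmulg1 /merge_gens addn1 /= odd_double uphalf_double.
Qed.

Lemma values1 : values H (gone G).
Proof. by exists [::], (fun=> gone G); split; first exact: Tsubgroup_nil. Qed.

Lemma valuesV x : values H x -> values H (ginv x).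
Proof.
case: HT => -[_ _ _ invH] _ [h [a [Hh ->]]].
by exists (winv h), a; rewrite weval_winv; split; first exact: invH.
Qed.

Lemma valuesM x y : values H x -> values H y -> values H (gmul x y).
Proof.
case: HT => -[_ _ catH _] substH [h [a [Hh ->]]] [h' [b [Hh' ->]]].
exists (wsubst (shift_gens 0) h ++ wsubst (shift_gens 1) h'), (merge_gens a b).
by rewrite weval_cat weval_shift_gens0 weval_shift_gens1; split; first by apply: catH; apply: substH.
Qed.

Lemma values_comm x y : values H x -> values H y -> values (comm_sub H) (gcomm x y).
Proof.
case: HT => _ substH [h [a [Hh ->]]] [h' [b [Hh' ->]]].
exists (wcomm (wsubst (shift_gens 0) h) (wsubst (shift_gens 1) h')), (merge_gens a b).
by rewrite weval_comm weval_shift_gens0 weval_shift_gens1; split; first by apply: cs_comm; apply: substH.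
Qed.

Lemma values_comm_sub_sub x : values (comm_sub H) x -> values H x.
Proof. by case=> [h [a [Hh ->]]]; exists h, a; split=> //; apply: comm_sub_sub. Qed.

End Values.

Lemma values_comm_sub (G : group) (H S : word -> Prop) (a : nat -> G) :
    is_Tsubgroup H ->
    (forall u, S u -> values H (weval a u)) ->
  forall w, comm_sub S w -> values (comm_sub H) (weval a w).
Proof.
move=> HT SH w; have CT := comm_sub_Tsubgroup HT.
elim=> {w} [u v Su Sv | | u v _ | u _ | u v /(weval_freeq a) <- //].
- by rewrite weval_comm; apply: values_comm; auto.
- exact: values1.
- by rewrite weval_cat => IHu _ IHv; apply: valuesM.
- by rewrite weval_winv => IHu; apply: valuesV.
Qed.

Definition commute_mod (G : group) (K : G -> Prop) N (a : 'I_N -> nat -> G) :=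
  forall k l : 'I_N, k != l -> forall i j, K (gcomm (a k i) (a l j)).

Lemma weak_ids_mod_uniform (G : group) (K : G -> Prop) (S : word -> Prop) :
  S [::] -> weak_ids_mod K S ->
  exists2 N, 0 < N & forall a : 'I_N -> nat -> G, commute_mod K a ->
    exists k, forall u, S u -> K (weval (a k) u).
Proof.
move=> S0 [N [N0 weakS]]; exists N => // a Ka.
pose escapes k u := S u /\ ~ K (weval (a k) u).
have pick k : {t | S t /\ ((exists u, escapes k u) -> escapes k t)}.
  apply: constructive_indefinite_description.
  have [[u escu] | none] := classic (exists u, escapes k u).
    by exists u; split=> //; case: escu.
  by exists [::]; split=> // /none.
have [k Kk] := weakS _ (fun k => proj1 (proj2_sig (pick k))) a Ka.
exists k => u Su; apply: NNPP => nKu.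
have [_ escape] := proj2_sig (pick k).
by case: (escape (ex_intro _ u (conj Su nKu))) => _ /(_ Kk).
Qed.

Lemma weak_ids_modT_comm (G : group) (S H : word -> Prop) :
  is_Tsubgroup S -> is_Tsubgroup H ->
  weak_ids_modT G H S -> weak_ids_modT G (comm_sub H) (comm_sub S).
Proof.
move=> ST HT /(weak_ids_mod_uniform (Tsubgroup_nil ST)) [N N0 uniformS].
exists N; split=> // s Ss a Ka.
have [k Sk] := uniformS a (fun k l kl i j => values_comm_sub_sub HT (Ka k l kl i j)).
by exists k; apply: values_comm_sub Sk _ (Ss k).
Qed.

Lemma weakstar_ids_mod_refl (G : group) S : is_Tsubgroup S -> weakstar_ids_mod G S S.
Proof. by move=> ST; exists 0, (fun=> S); split=> // -[]. Qed.

Lemma weakstar_ids_mod_trans (G : group) S H K :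
  weakstar_ids_mod G S H -> weakstar_ids_mod G H K -> weakstar_ids_mod G S K.
Proof.
case=> m1 [S1 [S10 S1m T1 W1]] [m2 [S2 [S20 S2m T2 W2]]].
exists (m1 + m2), (fun j => if j <= m1 then S1 j else S2 (j - m1)); split=> //.
- case: leqP => [m2_le0 | _]; last by rewrite addKn.
  have m2_0 : m2 = 0 by lia.
  by rewrite -S2m m2_0 S20 addn0.
- by move=> j jm; case: leqP => jm1; [apply: T1 | apply: T2]; lia.
- move=> j /andP [j0 jm]; case: leqP => jm1.
    have -> : j.-1 <= m1 by lia.
    by apply: W1; lia.
  case: leqP => jm1'.
    have -> : j = m1.+1 by lia.
    by rewrite subSnn [m1.+1.-1]/= S1m -S20; apply: W2; lia.
  have -> : j.-1 - m1 = (j - m1).-1 by lia.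
  by apply: W2; lia.
Qed.

Lemma weakstar_ids_mod_comm (G : group) S H :
  weakstar_ids_mod G S H -> weakstar_ids_mod G (comm_sub S) (comm_sub H).
Proof.
case=> m [Ss [Ss0 Ssm T W]].
exists m, (fun j => comm_sub (Ss j)); rewrite Ss0 Ssm; split=> // [j jm | j /andP[j0 jm]].
  exact/comm_sub_Tsubgroup/T.
by apply: weak_ids_modT_comm; [apply: T; lia | apply: T | apply: W; lia].
Qed.

Theorem corollary5p8 (G : group) :
  fin_gen G ->
  weakstar_ids_mod G (derived 1) (derived 2) ->
  forall n : nat, 1 <= n -> weakstar_ids_mod G (derived 1) (derived n).
Proof.
move=> _ weakstar12.
have shift n : weakstar_ids_mod G (derived n.+1) (derived n.+2).
  by elim: n => [// | n IHn]; apply: weakstar_ids_mod_comm.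
case=> [// | n] _; elim: n => [| n IHn].
  exact/weakstar_ids_mod_refl/derived_Tsubgroup.
exact: weakstar_ids_mod_trans IHn (shift n).
Qed.
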